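(* Let $1<p<\infty$, $\frac1p+\frac1q=1$, and $0<\gamma<1$. For any $n\in\mathbb{N}$ and any normalized blocks $x_1^*<\dots<x_n^*$ of $(e_j^* )_{j=1}^\infty$ in $Ti^*(p,\gamma)$, $$\left\|\sum_{j=1}^n x_j^*\right\|\le \frac{n^{\frac1q}}{\gamma}.$$
   Context: For $1<p<\infty$, $\frac1p+\frac1q=1$ and $0<\gamma<1$, the Tirilman space $Ti(p,\gamma)$ is the completion of $c_{00}$ (finitely supported real sequences) under the norm defined implicitly by $$\|a\|=\max\Big\{\|a\|_\infty,\ \gamma\sup\frac{\sum_{j=1}^n\|E_ja\|}{n^{1/q}}\Big\},$$ where the supremum is over all $n\in\mathbb{N}$ and all finite sets of consecutive natural numbers $E_1<\dots<E_n$ (meaning $\max E_i<\min E_{i+1}$), and $E_ja$ denotes the restriction of $a$ to $E_j$. The unit vectors $(e_n)$ form a 1-subsymmetric basis of $Ti(p,\gamma)$; $(e_n^* )$ denotes the biorthogonal functionals, a basis of the dual $Ti^*(p,\gamma)$. Normalized blocks of $(e^*_j)$ are norm-one vectors that are finite linear combinations of the $e^*_j$ with successive (disjoint, consecutive) supports. *)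

From HB Require Import structures.
From mathcomp Require Import all_boot all_order all_algebra.
From mathcomp Require Import all_classical all_reals all_analysis.
Set Implicit Arguments. Unset Strict Implicit. Unset Printing Implicit Defensive.
Import Order.TTheory GRing.Theory Num.Theory.
Local Open Scope classical_set_scope.
Local Open Scope ring_scope.

(* Real sequences are functions nat -> R; index j of the paper is k here
   (0-based indexing, irrelevant for the statement). *)
Section Tirilman.
Variable R : realType.

Definition finsupp (a : nat -> R) : Prop :=
  exists N : nat, forall k : nat, (N <= k)%N -> a k = 0.

Definition supnorm (a : nat -> R) : R := sup (range (fun k => `|a k|)).

Definition restr (m l : nat) (a : nat -> R) : nat -> R :=
  fun k => if (m <= k <= l)%N then a k else 0.

Definition admissible (s : seq (nat * nat)) : Prop :=
  s != [::] /\ all (fun e => (e.1 <= e.2)%N) s /\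
  sorted (fun e e' => (e.2 < e'.1)%N) s.

(* invq = 1/q, g = gamma.  Iterates of the implicit equation:
   ||a||_0 = ||a||_oo,
   ||a||_{k+1} = max(||a||_oo, g sup sum_j ||E_j a||_k / n^{1/q}). *)
Fixpoint tin_iter (invq g : R) (k : nat) (a : nat -> R) : R :=
  match k with
  | 0 => supnorm a
  | k'.+1 => Num.max (supnorm a)
      (g * sup [set r | exists s, admissible s /\
          r = (\sum_(e <- s) tin_iter invq g k' (restr e.1 e.2 a))
                / ((size s)%:R `^ invq)])
  end.

(* The Tirilman norm on c_00: the (increasing) limit of the iterates,
   i.e. the unique solution of the implicit equation. *)
Definition tinorm (invq g : R) (a : nat -> R) : R :=
  sup (range (fun k => tin_iter invq g k a)).

(* Norm in the dual Ti^star(p,gamma) of a finitely supported functional x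
   = sum_k x k e_k^star; computed on the dense subspace c_00. *)
Definition dualnorm (invq g : R) (x : nat -> R) : R :=
  sup [set r | exists (a : nat -> R) (N : nat),
         finsupp a /\ tinorm invq g a <= 1 /\
         (forall k, (N <= k)%N -> x k = 0) /\
         r = \sum_(k < N) x k * a k].

Definition successive (n : nat) (f : 'I_n -> nat -> R) : Prop :=
  forall (i j : 'I_n) (k k' : nat), (i < j)%N -> f i k != 0 -> f j k' != 0 ->
    (k < k')%N.

Definition normalized_block (invq g : R) (x : nat -> R) : Prop :=
  finsupp x /\ dualnorm invq g x = 1.

End Tirilman.

From HB Require Import structures.
From mathcomp Require Import all_boot all_order all_algebra.
From mathcomp Require Import all_classical all_reals all_analysis.
From mathcomp Require Import ring.
Import Order.TTheory GRing.Theory Num.Theory numFieldNormedType.Exports.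
Local Open Scope classical_set_scope.
Local Open Scope ring_scope.
Set Implicit Arguments. Unset Strict Implicit. Unset Printing Implicit Defensive.

(* Cover the support of x_i^* by intervals E_1 < ... < E_n.  For a in the unit
   ball, <sum x_i^*, a> = sum <x_i^*, E_i a> <= sum ||E_i a||, and the implicit
   equation of the norm gives gamma * sum ||E_i a|| / n^(1/q) <= ||a|| <= 1.
   This last inequality is immediate for the iterates ||.||_k of the implicit
   equation (with ||.||_k on the left and ||.||_(k+1) on the right); it passes
   to the norm because the iterates increase to it. *)

Section FiniteSupport.
Variable R : realType.
Implicit Types (a : nat -> R) (N : nat) (s : seq (nat * nat)).

Definition vanish_from N a := forall k, (N <= k)%N -> a k = 0.

Definition l1norm N a := \sum_(k < N) `|a k|.

Lemma l1norm_ge0 N a : 0 <= l1norm N a.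
Proof. exact: sumr_ge0. Qed.

Lemma abs_le_l1norm N a k : vanish_from N a -> `|a k| <= l1norm N a.
Proof.
move=> va; have [kN|Nk] := ltnP k N; last by rewrite va // normr0 l1norm_ge0.
rewrite /l1norm (bigD1 (Ordinal kN)) //= lerDl.
exact: sumr_ge0.
Qed.

Lemma has_sup_abs N a : vanish_from N a -> has_sup (range (fun k => `|a k|)).
Proof.
move=> va; split; first by exists `|a 0%N|, 0%N.
by exists (l1norm N a) => _ [k _ <-]; exact: abs_le_l1norm.
Qed.

Lemma abs_le_supnorm N a k : vanish_from N a -> `|a k| <= supnorm a.
Proof. by move=> va; apply: ub_le_sup; [case: (has_sup_abs va) | exists k]. Qed.

Lemma supnorm_ge0 N a : vanish_from N a -> 0 <= supnorm a.
Proof. by move=> va; apply: le_trans (abs_le_supnorm 0 va). Qed.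

Lemma supnorm_le_l1norm N a : vanish_from N a -> supnorm a <= l1norm N a.
Proof.
move=> va; apply: ge_sup; first by exists `|a 0%N|, 0%N.
by move=> _ [k _ <-]; exact: abs_le_l1norm.
Qed.

Lemma vanish_fromW N M a : (N <= M)%N -> vanish_from N a -> vanish_from M a.
Proof. by move=> NM va k Mk; apply: va; exact: leq_trans NM Mk. Qed.

Lemma vanish_from_restr N m l a : vanish_from N a -> vanish_from N (restr m l a).
Proof. by move=> va k kN; rewrite /restr va // if_same. Qed.

Lemma sumr_widen_vanish N M (F : nat -> R) : (N <= M)%N -> vanish_from N F ->
  \sum_(k < N) F k = \sum_(k < M) F k.
Proof.
move=> NM vF; rewrite (big_ord_widen M F NM) big_mkcond /=.
by apply: eq_bigr => k _; case: ltnP => // /vF ->.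
Qed.

Lemma sum_abs_restr_after a e0 s j : (j <= e0.2)%N ->
  all (fun e => (e.1 <= e.2)%N) s -> path (fun e e' => (e.2 < e'.1)%N) e0 s ->
  \sum_(e <- s) `|restr e.1 e.2 a j| = 0.
Proof.
elim: s e0 => [|e s IH] e0 je0 /=; first by rewrite big_nil.
move=> /andP[le_e all_s] /andP[e0e path_s].
have je : (j < e.1)%N by exact: leq_ltn_trans je0 e0e.
rewrite big_cons (IH e) //; last exact: leq_trans (ltnW je) le_e.
by rewrite /restr leqNgt je normr0 addr0.
Qed.

Lemma sum_abs_restr_le a s j :
  all (fun e => (e.1 <= e.2)%N) s -> sorted (fun e e' => (e.2 < e'.1)%N) s ->
  \sum_(e <- s) `|restr e.1 e.2 a j| <= `|a j|.
Proof.
elim: s => [|e s IH] /=; first by rewrite big_nil.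
move=> /andP[_ all_s] path_s; rewrite big_cons {1}/restr.
case: ifP => [/andP[_ je]|_].
  by rewrite (sum_abs_restr_after a je) ?addr0.
by rewrite normr0 add0r IH // (path_sorted path_s).
Qed.

Lemma sum_l1norm_restr_le N a s : admissible s ->
  \sum_(e <- s) l1norm N (restr e.1 e.2 a) <= l1norm N a.
Proof.
move=> [_ [all_s sorted_s]]; rewrite /l1norm exchange_big /=.
by apply: ler_sum => k _; exact: sum_abs_restr_le.
Qed.

Lemma pairing_sum_blocks n (x : 'I_n -> nat -> R) (E : 'I_n -> nat * nat) a K M :
  (K <= M)%N -> vanish_from K (fun k => \sum_i x i k) ->
  (forall i k, x i k != 0 -> ((E i).1 <= k <= (E i).2)%N) ->
  \sum_(k < K) (\sum_i x i k) * a k =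
    \sum_i \sum_(k < M) x i k * restr (E i).1 (E i).2 a k.
Proof.
move=> KM vsum E_supp.
rewrite (@sumr_widen_vanish K M (fun k => (\sum_i x i k) * a k)) //;
  last by move=> k /vsum ->; rewrite mul0r.
under eq_bigr do rewrite mulr_suml.
rewrite exchange_big; apply: eq_bigr => i _; apply: eq_bigr => k _.
have [->|nz] := eqVneq (x i k) 0; first by rewrite !mul0r.
by rewrite /restr E_supp.
Qed.

Lemma vanish_from_family (I : finType) (f : I -> nat -> R) :
  (forall i, finsupp (f i)) -> exists N, forall i, vanish_from N (f i).
Proof.
move=> fin_f.
have [Nf vNf] := @fin_all_exists _ (fun=> nat) (fun i N => vanish_from N (f i)) fin_f.
by exists (\max_i Nf i) => i; apply: vanish_fromW (vNf i); exact: leq_bigmax.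
Qed.

Lemma successive_supports_intervals n (x : 'I_n -> nat -> R) :
  successive x -> (forall i, finsupp (x i)) -> (forall i, exists k, x i k != 0) ->
  exists E : 'I_n -> nat * nat,
    [/\ all (fun e => (e.1 <= e.2)%N) [seq E i | i <- enum 'I_n],
        sorted (fun e e' => (e.2 < e'.1)%N) [seq E i | i <- enum 'I_n] &
        forall i k, x i k != 0 -> ((E i).1 <= k <= (E i).2)%N].
Proof.
move=> succ_x fin_x nz_x; have [N vN] := vanish_from_family fin_x.
have lt_N i k : x i k != 0 -> (k < N)%N.
  by move=> nz; rewrite ltnNge; apply: contra nz => /(vN i) ->.
pose m i := ex_minn (nz_x i).
pose L i := ex_maxn (nz_x i) (fun k nz => ltnW (lt_N i k nz)).
have m_nz i : x i (m i) != 0 by rewrite /m; case: ex_minnP.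
have L_nz i : x i (L i) != 0 by rewrite /L; case: ex_maxnP.
have m_le i k : x i k != 0 -> (m i <= k)%N by rewrite /m; case: ex_minnP => ? _; apply.
have le_L i k : x i k != 0 -> (k <= L i)%N by rewrite /L; case: ex_maxnP => ? _; apply.
exists (fun i => (m i, L i)); split.
- by apply/allP => _ /mapP[i _ ->]; exact: m_le (L_nz i).
- have := iota_ltn_sorted 0 n; rewrite -val_enum_ord !sorted_map.
  by apply: sub_sorted => i j /= ij; exact: succ_x ij (L_nz i) (m_nz j).
- by move=> i k nz; rewrite m_le // le_L.
Qed.

End FiniteSupport.

Section TirilmanNorm.
Variables (R : realType) (invq g : R).
Hypotheses (invq_ge0 : 0 <= invq) (g_gt0 : 0 < g) (g_le1 : g <= 1).
Let g_ge0 : 0 <= g := ltW g_gt0.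
Implicit Types (a b x : nat -> R) (c C : R) (N : nat) (s : seq (nat * nat)).

Local Notation tin k := (tin_iter invq g k).
Local Notation norm := (tinorm invq g).

Definition tin_ratios k a := [set r | exists s, admissible s /\
  r = (\sum_(e <- s) tin k (restr e.1 e.2 a)) / ((size s)%:R `^ invq)].

Lemma tin_iterS k a : tin k.+1 a = Num.max (supnorm a) (g * sup (tin_ratios k a)).
Proof. by []. Qed.

Lemma tin_ratios_neq0 k a : tin_ratios k a !=set0.
Proof. by eexists; exists [:: (0, 0)%N]. Qed.

Lemma size_powR_ge1 s : admissible s -> 1 <= (size s)%:R `^ invq.
Proof.
move=> [s_neq0 _]; rewrite -[X in X <= _](powRr0 (size s)%:R).
by apply: ler_powR; rewrite // ler1n lt0n size_eq0.
Qed.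

Lemma ubound_tin_ratios k N a : vanish_from N a ->
  (forall b, vanish_from N b -> tin k b <= l1norm N b) ->
  ubound (tin_ratios k a) (l1norm N a).
Proof.
move=> va tin_le _ [s [adm_s ->]].
have d_ge1 := size_powR_ge1 adm_s.
rewrite ler_pdivrMr ?(lt_le_trans ltr01 d_ge1) //.
apply: le_trans (ler_peMr (l1norm_ge0 N a) d_ge1).
apply: le_trans (sum_l1norm_restr_le N a adm_s).
by apply: ler_sum => e _; apply: tin_le; exact: vanish_from_restr.
Qed.

Lemma tin_iter_le_l1norm k N a : vanish_from N a -> tin k a <= l1norm N a.
Proof.
elim: k a => [|k IH] a va; first exact: supnorm_le_l1norm va.
rewrite tin_iterS ge_max (supnorm_le_l1norm va) /=.
have sup_le : sup (tin_ratios k a) <= l1norm N a.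
  by apply: ge_sup; [exact: tin_ratios_neq0 | exact: ubound_tin_ratios].
apply: le_trans (ler_wpM2l g_ge0 sup_le) _.
exact: ler_piMl (l1norm_ge0 N a) g_le1.
Qed.

Lemma has_sup_tin_ratios k N a : vanish_from N a -> has_sup (tin_ratios k a).
Proof.
move=> va; split; first exact: tin_ratios_neq0.
by exists (l1norm N a); apply: ubound_tin_ratios => // b; exact: tin_iter_le_l1norm.
Qed.

Lemma tin_ratio_le_sup k N a s : vanish_from N a -> admissible s ->
  (\sum_(e <- s) tin k (restr e.1 e.2 a)) / ((size s)%:R `^ invq)
    <= sup (tin_ratios k a).
Proof.
by move=> va adm_s; apply: ub_le_sup; [case: (has_sup_tin_ratios k va) | exists s].
Qed.

Lemma tin_iter_ge0 k N a : vanish_from N a -> 0 <= tin k a.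
Proof.
case: k => [|k] va; first exact: supnorm_ge0 va.
by rewrite tin_iterS le_max (supnorm_ge0 va).
Qed.

Lemma tin_iter_le_succ k N a : vanish_from N a -> tin k a <= tin k.+1 a.
Proof.
elim: k a => [|k IH] a va; first by rewrite tin_iterS le_max lexx.
rewrite !tin_iterS ge_max le_max lexx /= le_max; apply/orP; right.
rewrite ler_pM2l //.
apply: ge_sup => [|_ [s [adm_s ->]]]; first exact: tin_ratios_neq0.
apply: le_trans (tin_ratio_le_sup k.+1 va adm_s).
apply: ler_wpM2r; first by rewrite invr_ge0 powR_ge0.
by apply: ler_sum => e _; apply: IH; exact: vanish_from_restr va.
Qed.

Lemma has_ubound_tin_iter N a : vanish_from N a -> has_ubound (range (fun k => tin k a)).
Proof. by move=> va; exists (l1norm N a) => _ [k _ <-]; exact: tin_iter_le_l1norm. Qed.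

Lemma tin_iter_le_tinorm k N a : vanish_from N a -> tin k a <= norm a.
Proof.
by move=> va; apply: (ub_le_sup (has_ubound_tin_iter va)); exists k.
Qed.

Lemma tinorm_ge0 N a : vanish_from N a -> 0 <= norm a.
Proof. by move=> va; apply: le_trans (tin_iter_ge0 0 va) (tin_iter_le_tinorm 0 va). Qed.

Lemma tinorm_le_l1norm N a : vanish_from N a -> norm a <= l1norm N a.
Proof.
move=> va; apply: ge_sup; first by exists (tin 0 a), 0%N.
by move=> _ [k _ <-]; exact: tin_iter_le_l1norm.
Qed.

Lemma cvg_tin_iter N a : vanish_from N a -> (fun k => tin k a) @ \oo --> norm a.
Proof.
move=> va; apply: nondecreasing_cvgn; last exact: has_ubound_tin_iter va.
by apply/nondecreasing_seqP => k; exact: tin_iter_le_succ va.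
Qed.

Lemma restr_scale m l c a :
  restr m l (fun j => c * a j) = (fun j => c * restr m l a j).
Proof. by apply: funext => j; rewrite /restr; case: ifP; rewrite ?mulr0. Qed.

Lemma supnorm_scale N c a : 0 < c -> vanish_from N a ->
  supnorm (fun j => c * a j) <= c * supnorm a.
Proof.
move=> c_gt0 va; apply: ge_sup; first by exists `|c * a 0%N|, 0%N.
move=> _ [k _ <-] /=; rewrite normrM gtr0_norm // ler_pM2l //.
exact: abs_le_supnorm k va.
Qed.

Lemma tin_iter_scale k N c a : 0 < c -> vanish_from N a ->
  tin k (fun j => c * a j) <= c * tin k a.
Proof.
elim: k a => [|k IH] a c_gt0 va; first exact: (supnorm_scale c_gt0 va).
rewrite !tin_iterS ge_max; apply/andP; split.
  apply: le_trans (supnorm_scale c_gt0 va) _.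
  by apply: ler_wpM2l; [exact: ltW | rewrite le_max lexx].
apply: (@le_trans _ _ (c * (g * sup (tin_ratios k a)))); last first.
  by rewrite ler_pM2l // le_max lexx orbT.
rewrite mulrCA ler_pM2l //.
apply: ge_sup => [|_ [s [adm_s ->]]]; first exact: tin_ratios_neq0.
apply: le_trans (ler_wpM2l (ltW c_gt0) (tin_ratio_le_sup k va adm_s)).
rewrite mulrA; apply: ler_wpM2r; first by rewrite invr_ge0 powR_ge0.
rewrite mulr_sumr; apply: ler_sum => e _; rewrite restr_scale.
by apply: IH => //; exact: vanish_from_restr va.
Qed.

Lemma tinorm_scale N c a : 0 < c -> vanish_from N a ->
  norm (fun j => c * a j) <= c * norm a.
Proof.
move=> c_gt0 va; apply: ge_sup; first by eexists; exists 0%N.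
move=> _ [k _ <-]; apply: le_trans (tin_iter_scale k c_gt0 va) _.
by rewrite ler_pM2l // (tin_iter_le_tinorm k va).
Qed.

Lemma sum_tin_iter_restr_le k N a s : vanish_from N a -> admissible s ->
  \sum_(e <- s) tin k (restr e.1 e.2 a) <= (size s)%:R `^ invq / g * tin k.+1 a.
Proof.
move=> va adm_s; set S := \sum_(e <- s) _; set d := _ `^ invq.
have d_gt0 : 0 < d := lt_le_trans ltr01 (size_powR_ge1 adm_s).
have ratio_le : g * (S / d) <= tin k.+1 a.
  apply: le_trans (ler_wpM2l g_ge0 (tin_ratio_le_sup k va adm_s)) _.
  by rewrite tin_iterS le_max lexx orbT.
have -> : S = d / g * (g * (S / d)) by field; rewrite !gt_eqF.
by apply: ler_wpM2l ratio_le; rewrite divr_ge0 // ltW.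
Qed.

Lemma sum_tinorm_restr_le N a s : vanish_from N a ->
  all (fun e => (e.1 <= e.2)%N) s -> sorted (fun e e' => (e.2 < e'.1)%N) s ->
  \sum_(e <- s) norm (restr e.1 e.2 a) <= (size s)%:R `^ invq / g * norm a.
Proof.
move=> va all_s sorted_s; have [->|s_neq0] := eqVneq s [::].
  by rewrite big_nil mulr_ge0 ?divr_ge0 ?powR_ge0 ?g_ge0 ?(tinorm_ge0 va).
have adm_s : admissible s by [].
have cvg_sum : \sum_(e <- s) tin k (restr e.1 e.2 a) @[k --> \oo]
    --> \sum_(e <- s) norm (restr e.1 e.2 a).
  apply: cvg_big => [|e _]; first exact: add_continuous.
  exact: cvg_tin_iter (vanish_from_restr _ _ va).
apply: (cvgr_to_le cvg_sum); apply: nearW => k.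
apply: le_trans (sum_tin_iter_restr_le k va adm_s) _.
apply: ler_wpM2l; last exact: tin_iter_le_tinorm va.
by rewrite divr_ge0 ?powR_ge0 // ltW.
Qed.

Definition dual_pairings x := [set r | exists (a : nat -> R) (N : nat),
  finsupp a /\ norm a <= 1 /\ vanish_from N x /\
  r = \sum_(k < N) x k * a k].

Lemma dualnorm_le x C : finsupp x ->
  (forall a N, finsupp a -> norm a <= 1 -> vanish_from N x ->
     \sum_(k < N) x k * a k <= C) ->
  dualnorm invq g x <= C.
Proof.
move=> [Nx vx] pairing_le.
apply: ge_sup => [|_ [a [N [fa [a_le1 [vxN ->]]]]]]; last exact: pairing_le.
exists 0, (fun=> 0), Nx; split; first by exists 0%N.
split; last by split => //; rewrite big1 // => k _; rewrite mulr0.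
have v0 : vanish_from 0 (fun=> 0 : R) by [].
by apply: le_trans (tinorm_le_l1norm v0) _; rewrite /l1norm big_ord0.
Qed.

Lemma normalized_block_neq0 x : normalized_block invq g x -> exists k, x k != 0.
Proof.
move=> [fx x1]; have [//|no_nz] := pselect (exists k, x k != 0).
have x0 k : x k = 0 by apply/eqP/negPn/negP => nz; apply: no_nz; exists k.
have : dualnorm invq g x <= 0.
  by apply: dualnorm_le => // a N _ _ _; rewrite big1 // => k _; rewrite x0 mul0r.
by rewrite x1 ler10.
Qed.

Lemma pairing_le_tinorm x N b : normalized_block invq g x -> vanish_from N x ->
  finsupp b -> \sum_(k < N) x k * b k <= norm b.
Proof.
move=> [_ x1] vx [Nb vb].
(* [sup] of a set without supremum is [0], so [dualnorm x = 1] forces one. *)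
have x_sup : has_sup (dual_pairings x).
  apply: contrapT => no_sup; move: x1.
  by rewrite /dualnorm -/(dual_pairings x) sup_out // => /eqP; rewrite eq_sym oner_eq0.
apply/ler_addgt0Pr => e e_gt0; set t := norm b.
have te_gt0 : 0 < t + e by rewrite ltr_wpDl // (tinorm_ge0 vb).
pose c := (t + e)^-1.
have c_gt0 : 0 < c by rewrite invr_gt0.
have cb_le1 : norm (fun j => c * b j) <= 1.
  apply: le_trans (tinorm_scale c_gt0 vb) _.
  by rewrite mulrC ler_pdivrMr // mul1r lerDl ltW.
have pairing_cb : \sum_(k < N) x k * (c * b k) <= 1.
  rewrite -x1; apply: (ub_le_sup x_sup.2).
  by exists (fun j => c * b j), N; split => //; exists Nb => k /vb ->; rewrite mulr0.
have -> : \sum_(k < N) x k * b k = (t + e) * \sum_(k < N) x k * (c * b k).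
  rewrite mulr_sumr; apply: eq_bigr => k _; rewrite /c.
  by field; rewrite gt_eqF.
by rewrite -[X in _ <= X]mulr1 ler_pM2l.
Qed.

End TirilmanNorm.

Theorem lemma7 (R : realType) (p q gamma : R)
  (hp : 1 < p) (hpq : p^-1 + q^-1 = 1) (hg0 : 0 < gamma) (hg1 : gamma < 1)
  (n : nat) (x : 'I_n -> nat -> R)
  (hblock : forall i, normalized_block q^-1 gamma (x i))
  (hsucc : successive x) :
  dualnorm q^-1 gamma (fun k => \sum_(i < n) x i k)
    <= (n%:R `^ q^-1) / gamma.
Proof.
have invq_ge0 : 0 <= q^-1.
  rewrite -(addKr p^-1 q^-1) hpq addrC subr_ge0 invf_le1 ?ltW //.
  exact: lt_trans ltr01 hp.
have g_le1 := ltW hg1.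
have fin_x i : finsupp (x i) := (hblock i).1.
have [N vN] := vanish_from_family fin_x.
have [E [E_le E_sorted E_supp]] := successive_supports_intervals hsucc fin_x
  (fun i => normalized_block_neq0 invq_ge0 hg0 g_le1 (hblock i)).
apply: dualnorm_le => // [|a K [Na va] a_le1 vsum].
  by exists N => k kN; rewrite big1 // => i _; rewrite vN.
rewrite (pairing_sum_blocks a (leq_maxl K N) vsum E_supp).
apply: le_trans (_ : \sum_i tinorm q^-1 gamma (restr (E i).1 (E i).2 a) <= _).
  apply: ler_sum => i _; apply: (pairing_le_tinorm invq_ge0 hg0 g_le1 (hblock i)).
    exact: vanish_fromW (leq_maxr K N) (vN i).
  by exists Na; exact: vanish_from_restr.
have -> : \sum_i tinorm q^-1 gamma (restr (E i).1 (E i).2 a) =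
    \sum_(e <- [seq E i | i <- enum 'I_n]) tinorm q^-1 gamma (restr e.1 e.2 a).
  by rewrite big_map big_enum.
apply: le_trans (sum_tinorm_restr_le invq_ge0 hg0 g_le1 va E_le E_sorted) _.
by rewrite size_map size_enum_ord ler_piMr // divr_ge0 ?powR_ge0 ?ltW.
Qed.
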